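(* Let $A$ be a finite-dimensional irreducible ordered linear space. Then every order-automorphism $\chi$ of $A$ lies on an extremal ray of the cone $\mathcal{L}_{+}(A,A)$ of positive linear maps from $A$ to $A$; that is, whenever $\chi = \psi + \mu$ with $\psi,\mu \in \mathcal{L}_{+}(A,A)$, both $\psi$ and $\mu$ are non-negative scalar multiples of $\chi$.
   Context: An ordered linear space is a finite-dimensional real vector space $V$ with a positive cone $V_+$ that is a convex cone which is pointed ($V_+\cap -V_+=\{0\}$), closed and generating ($V=V_+-V_+$); $x\le y$ iff $y-x\in V_+$. A linear map $\phi:V\to W$ is positive if $\phi(V_+)\subseteq W_+$; $\mathcal{L}_+(V,W)$ denotes the cone of positive linear maps. An order-automorphism of $V$ is a linear bijection $\phi:V\to V$ with $\phi(x)\ge 0$ iff $x\ge 0$. The ordered direct sum of ordered linear spaces $V_1,V_2$ is $V_1\oplus V_2$ with positive cone $\{x+y: x\in (V_1)_+, y\in (V_2)_+\}$. $V$ is irreducible if it admits no decomposition as an ordered direct sum of two nonzero ordered subspaces. *)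

From HB Require Import structures.
From mathcomp Require Import all_boot all_order all_algebra.
From mathcomp Require Import all_classical all_reals all_analysis.
Set Implicit Arguments. Unset Strict Implicit. Unset Printing Implicit Defensive.
Import Order.TTheory GRing.Theory Num.Theory.
Import numFieldNormedType.Exports.
Local Open Scope ring_scope.
Local Open Scope classical_set_scope.

(* A finite-dimensional real vector space is modelled as 'M[R]_(1, n),
   R : realType.  Linear maps V -> V are matrices acting on the right:
   x |-> x *m M. *)

Definition positive_cone (R : realType) (n : nat) (C : set 'M[R]_(1, n)) : Prop :=
  C 0 /\
  (forall x y, C x -> C y -> C (x + y)) /\
  (forall (a : R) x, 0 <= a -> C x -> C (a *: x)) /\
  (forall x, C x -> C (- x) -> x = 0) /\
  closed C /\
  (forall v, exists x y, C x /\ C y /\ v = x - y).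

Definition positive_map (R : realType) (n : nat) (C : set 'M[R]_(1, n))
  (M : 'M[R]_n) : Prop := forall x, C x -> C (x *m M).

Definition order_automorphism (R : realType) (n : nat) (C : set 'M[R]_(1, n))
  (M : 'M[R]_n) : Prop :=
  M \in unitmx /\ (forall x, C (x *m M) <-> C x).

(* (V, C) is the ordered direct sum of the nonzero subspaces (row spaces)
   V1 and V2, each carrying the induced cone C ∩ Vi. *)
Definition ordered_direct_sum_decomp (R : realType) (n : nat)
  (C : set 'M[R]_(1, n)) (V1 V2 : 'M[R]_n) : Prop :=
  [/\ V1 != 0, V2 != 0,
      (V1 :&: V2 == (0 : 'M[R]_n))%MS,
      (V1 + V2 == 1%:M)%MS &
      (forall x, C x <-> exists y z, [/\ (y <= V1)%MS, C y, (z <= V2)%MS, C z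
                                      & x = y + z])].

Definition irreducible_ordered (R : realType) (n : nat) (C : set 'M[R]_(1, n)) : Prop :=
  ~ exists V1 V2 : 'M[R]_n, ordered_direct_sum_decomp C V1 V2.

From HB Require Import structures.
From mathcomp Require Import all_boot all_order all_algebra.
From mathcomp Require Import all_classical all_reals all_analysis.
From mathcomp Require Import ring zify.
Import Order.TTheory GRing.Theory Num.Theory.
Import numFieldNormedType.Exports.
Local Open Scope ring_scope.
Local Open Scope classical_set_scope.
Set Implicit Arguments. Unset Strict Implicit. Unset Printing Implicit Defensive.

(* Set P = psi chi^-1, so that P and 1 - P are positive maps.  Every x in the cone
   is a finite sum of eigenvectors of P lying in the cone: take the largest c1, c2
   with x P - c1 x and x (1 - P) - c2 x in the cone; either these remainders cancel
   and x is an eigenvector, or, rescaled, they split x into two cone elements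
   whose faces no longer contain x and so have smaller dimension.  If l is the
   eigenvalue of a nonzero cone eigenvector and P <> l, sorting the eigenvectors
   by whether their eigenvalue is l splits the cone along ker (P - l) and
   im (P - l), an ordered direct sum decomposition contradicting irreducibility.
   So P = l, i.e. psi = l chi and mu = (1 - l) chi with 0 <= l <= 1. *)

Lemma eigenvector_submx (F : fieldType) n (A : 'M[F]_n) (e : 'rV[F]_n) a :
  e *m A = a *: e -> a != 0 -> (e <= A)%MS.
Proof. by move=> eA a_neq0; rewrite -(scalerK a_neq0 e) -eA scalemx_sub ?submxMl. Qed.

Lemma capmx_kermx_eq0 (F : fieldType) n (A : 'M[F]_n) :
  (kermx A + A == 1%:M)%MS -> (kermx A :&: A == (0 : 'M[F]_n))%MS.
Proof.
move=> full; apply/andP; split; last exact: sub0mx.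
rewrite submx0 -mxrank_eq0; have := mxrank_sum_cap (kermx A) A.
by rewrite (eqmx_rank full) mxrank1 mxrank_ker; have := rank_leq_row A; lia.
Qed.

Section PositiveCone.
Variables (R : realType) (n : nat) (C : set 'rV[R]_n).
Hypothesis hC : positive_cone C.

Lemma cone0 : C 0.
Proof. by case: hC. Qed.

Lemma coneD x y : C x -> C y -> C (x + y).
Proof. by case: hC => _ [+ _]; apply. Qed.

Lemma coneZ (a : R) x : 0 <= a -> C x -> C (a *: x).
Proof. by case: hC => _ [_ [+ _]]; apply. Qed.

Lemma cone_pointed x : C x -> C (- x) -> x = 0.
Proof. by case: hC => _ [_ [_ [+ _]]]; apply. Qed.

Lemma cone_closed : closed C.
Proof. by case: hC => _ [_ [_ [_ []]]]. Qed.

Lemma cone_generating v : exists x y, [/\ C x, C y & v = x - y].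
Proof. by case: hC => _ [_ [_ [_ [_ /(_ v) [x [y [? [? ->]]]]]]]]; exists x, y. Qed.

Lemma cone_sum (I : Type) (r : seq I) (p : pred I) (F : I -> 'rV[R]_n) :
  (forall i, p i -> C (F i)) -> C (\sum_(i <- r | p i) F i).
Proof. by move=> CF; apply: big_ind => //; [exact: cone0 | exact: coneD]. Qed.

Lemma cone_addr_eq0 x y : C x -> C y -> x + y = 0 -> x = 0.
Proof.
move=> Cx Cy /eqP; rewrite addr_eq0 => /eqP xy.
by apply: cone_pointed; rewrite // xy opprK.
Qed.

Lemma cone_scale_ge0 (a : R) e : C e -> e != 0 -> C (a *: e) -> 0 <= a.
Proof.
move=> Ce e0 Cae; rewrite leNgt; apply: contra e0 => a_lt0.
apply/eqP/cone_pointed => //.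
have -> : - e = (- a^-1) *: (a *: e) by rewrite scalerA mulNr mulVf ?lt_eqF ?scaleN1r.
by apply: coneZ; rewrite // oppr_ge0 invr_le0 ltW.
Qed.

Lemma cone_neq0 : (0 < n)%N -> exists2 e, C e & e != 0.
Proof.
move=> n_gt0; have [x [y [Cx Cy e1]]] := cone_generating (const_mx 1).
have [x0|] := eqVneq x 0; last by exists x.
exists y => //; apply: contra_eq_neq e1 => ->; rewrite x0 subr0.
by apply/eqP => /rowP /(_ (Ordinal n_gt0)) /eqP; rewrite !mxE oner_eq0.
Qed.

(* Closedness makes the cone archimedean. *)
Lemma cone_shift_unbounded_eq0 x y : C x -> (forall c, C (y - c *: x)) -> x = 0.
Proof.
move=> Cx Cy; apply: cone_pointed => //.
have : (fun k : nat => k.+1%:R^-1 *: y - x) @ \oo --> 0 *: y - x.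
  apply: cvgB; last exact: cvg_cst.
  by apply: cvgZ; [exact: cvg_harmonic | exact: cvg_cst].
rewrite scale0r sub0r; apply: (closed_cvg _ cone_closed); apply: nearW => k.
have -> : k.+1%:R^-1 *: y - x = k.+1%:R^-1 *: (y - k.+1%:R *: x).
  by rewrite scalerBr scalerA mulVf ?scale1r ?pnatr_eq0.
by apply: coneZ; rewrite // invr_ge0 ler0n.
Qed.

Lemma cone_shift_max x y c0 : C x -> x != 0 -> C (y - c0 *: x) ->
  exists2 c, C (y - c *: x) & forall c', C (y - c' *: x) -> c' <= c.
Proof.
move=> Cx x0 Cc0; set S := [set c | C (y - c *: x)].
have S_down c c' : S c -> c' <= c -> S c'.
  move=> Sc c'c; rewrite /S /=; have -> : y - c' *: x = (y - c *: x) + (c - c') *: x.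
    by rewrite scalerBl addrA subrK.
  by apply: coneD => //; apply: coneZ; rewrite // subr_ge0.
have supS : has_sup S.
  split; first by exists c0.
  apply/not_existsP => S_unbounded; move/eqP: x0; apply.
  apply: (cone_shift_unbounded_eq0 Cx) => c.
  have /existsNP [c' /not_implyP [Sc' c'_gt]] := S_unbounded c.
  by apply: (S_down c') => //; apply/ltW; rewrite ltNge; apply/negP.
exists (sup S); last by move=> c Sc; apply: sup_upper_bound.
have : (fun k : nat => y - (sup S - k.+1%:R^-1) *: x) @ \oo --> y - (sup S - 0) *: x.
  apply: cvgB; first exact: cvg_cst.
  apply: cvgZ; last exact: cvg_cst.
  by apply: cvgB; [exact: cvg_cst | exact: cvg_harmonic].
rewrite subr0; apply: (closed_cvg _ cone_closed); apply: nearW => k.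
have k_gt0 : 0 < k.+1%:R^-1 :> R by rewrite invr_gt0.
have [c Sc ltc] := sup_adherent k_gt0 supS.
exact: S_down Sc (ltW ltc).
Qed.

(* [v] lies in the linear span of the smallest face of [C] containing [x];
   [face_rank_le x k] bounds the dimension of that face by [k]. *)
Definition face_dir (x v : 'rV[R]_n) :=
  exists2 t : R, 0 < t & C (x + t *: v) /\ C (x - t *: v).

Lemma face_dir0 x : C x -> face_dir x 0.
Proof. by move=> Cx; exists 1; rewrite // scaler0 addr0 subr0. Qed.

Lemma face_dir_self x : C x -> face_dir x x.
Proof.
by move=> Cx; exists 1; rewrite // scale1r subrr; split; [apply: coneD | apply: cone0].
Qed.

Lemma face_dirN x v : face_dir x v -> face_dir x (- v).
Proof. by case=> t t_gt0 [Cp Cm]; exists t; rewrite // scalerN opprK. Qed.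

Lemma face_dirZ x v (a : R) : C x -> face_dir x v -> face_dir x (a *: v).
Proof.
move=> Cx xv; wlog a_gt0 : a v xv / 0 < a.
  move=> face_dir_pos; have [a_lt0|a_gt0|->] := ltgtP a 0.
  - rewrite -[a]opprK scaleNr -scalerN.
    by apply: face_dir_pos (face_dirN xv) _; rewrite oppr_gt0.
  - exact: face_dir_pos.
  - by rewrite scale0r; apply: face_dir0.
case: xv => t t_gt0 Ct; exists (t / a); first by rewrite divr_gt0.
by rewrite scalerA divfK ?gt_eqF.
Qed.

Lemma face_dirD x v w : face_dir x v -> face_dir x w -> face_dir x (v + w).
Proof.
case=> t t_gt0 [Ctp Ctm] [s s_gt0 [Csp Csm]].
have ts_gt0 : 0 < t + s by rewrite addr_gt0.
have comb v' w' : C (x + t *: v') -> C (x + s *: w') ->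
    C (x + (t * s / (t + s)) *: (v' + w')).
  move=> Cv' Cw'; rewrite [X in C X](_ : _ =
      (s / (t + s)) *: (x + t *: v') + (t / (t + s)) *: (x + s *: w')).
    by apply: coneD; apply: coneZ; rewrite // divr_ge0 // ltW.
  by apply/rowP => j; rewrite !mxE; field; rewrite gt_eqF.
exists (t * s / (t + s)); first by rewrite !mulr_gt0 ?invr_gt0.
by rewrite -scalerN opprD; split; apply: comb; rewrite ?scalerN.
Qed.

Lemma face_dir_submx x m (A : 'M[R]_(m, n)) u : C x ->
  (forall i, face_dir x (row i A)) -> (u <= A)%MS -> face_dir x u.
Proof.
move=> Cx A_face /submxP [D ->]; rewrite mulmx_sum_row.
apply: big_ind; [exact: face_dir0 | exact: face_dirD | move=> i _].
exact: face_dirZ.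
Qed.

Lemma face_dir_le x y v : C (x - y) -> face_dir y v -> face_dir x v.
Proof.
move=> Cxy [t t_gt0 [Cp Cm]]; exists t => //.
have split_x u : x + u = (x - y) + (y + u) by rewrite addrA subrK.
by rewrite (split_x (t *: v)) (split_x (- (t *: v))); split; apply: coneD.
Qed.

Definition face_rank_le (x : 'rV[R]_n) k :=
  forall m (A : 'M[R]_(m, n)), (forall i, face_dir x (row i A)) -> (\rank A <= k)%N.

Lemma face_rank_le_n x : face_rank_le x n.
Proof. by move=> m A _; apply: rank_leq_col. Qed.

Lemma face_rank_le0 x : C x -> face_rank_le x 0 -> x = 0.
Proof.
move=> Cx /(_ 1 x) rk_x; apply/eqP; rewrite -mxrank_eq0 -leqn0 rk_x // => i.
by rewrite row_id; apply: face_dir_self.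
Qed.

Lemma face_rank_le_lt x y k : C y -> C (x - y) -> face_rank_le x k.+1 ->
  ~ face_dir y x -> face_rank_le y k.
Proof.
move=> Cy Cxy rk_x not_yx m A A_face.
have Cx : C x by rewrite -(subrK y x); apply: coneD.
have /rk_x : forall i, face_dir x (row i (col_mx A x)).
  move=> i; case: (split_ordP i) => j ->; rewrite ?rowKu ?rowKd ?row_id.
    exact: face_dir_le (A_face j).
  exact: face_dir_self.
have x_notin_A : ~~ (x <= A)%MS by apply/negP => /(face_dir_submx Cy A_face).
have : (A < A + x)%MS.
  rewrite ltmxE addsmxSl; apply: contra x_notin_A; exact: submx_trans (addsmxSr A x).
rewrite ltmxErank => /andP [_ rk_lt]; rewrite -addsmxE => rk_le.
by rewrite -ltnS (leq_trans rk_lt rk_le).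
Qed.

Lemma not_face_dir_max_shift (M : 'M[R]_n) x c (d : R) :
  (forall c', C (x *m M - c' *: x) -> c' <= c) -> 0 < d ->
  ~ face_dir (d^-1 *: (x *m M - c *: x)) x.
Proof.
move=> c_max d_gt0 [t t_gt0 [_ Cm]].
have : C (x *m M - (c + d * t) *: x).
  have -> : x *m M - (c + d * t) *: x = d *: (d^-1 *: (x *m M - c *: x) - t *: x).
    by apply/rowP => j; rewrite !mxE; field; rewrite gt_eqF.
  by apply: coneZ; rewrite // ltW.
by move/c_max; rewrite gerDl leNgt mulr_gt0.
Qed.

Section PositiveBelowIdentity.
Variable P : 'M[R]_n.
Hypotheses (hP : positive_map C P) (hQ : positive_map C (1%:M - P)).

Lemma cone_eigen_split x : C x ->
  (exists mu, x *m P = mu *: x) \/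
  exists y z, [/\ C y, C z, x = y + z, ~ face_dir y x & ~ face_dir z x].
Proof.
move=> Cx; have [->|x_neq0] := eqVneq x 0.
  by left; exists 0; rewrite mul0mx scaler0.
have shift_max M : positive_map C M -> exists2 c, C (x *m M - c *: x) &
    forall c', C (x *m M - c' *: x) -> c' <= c.
  move=> M_pos; apply: (cone_shift_max (c0 := 0) Cx x_neq0).
  by rewrite scale0r subr0; apply: M_pos.
have [c1 Cu1 c1_max] := shift_max _ hP.
have [c2 Cu2 c2_max] := shift_max _ hQ.
set d := 1 - c1 - c2.
have u_sum : (x *m P - c1 *: x) + (x *m (1%:M - P) - c2 *: x) = d *: x.
  by apply/rowP => j; rewrite /d mulmxBr mulmx1 !mxE; ring.
have [d_le0|d_gt0] := lerP d 0.
  left; exists c1; apply/subr0_eq.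
  apply: (@cone_addr_eq0 _ (x *m (1%:M - P) - c2 *: x - d *: x)) => //.
    by apply: coneD => //; rewrite -scaleNr; apply: coneZ; rewrite // oppr_ge0.
  by rewrite addrA u_sum subrr.
right; exists (d^-1 *: (x *m P - c1 *: x)), (d^-1 *: (x *m (1%:M - P) - c2 *: x)).
split; try by apply: coneZ; rewrite // invr_ge0 ltW.
- by rewrite -scalerDr u_sum scalerA mulVf ?gt_eqF // scale1r.
- exact: not_face_dir_max_shift.
- exact: not_face_dir_max_shift.
Qed.

Definition cone_eigen_sum (x : 'rV[R]_n) := exists s : seq 'rV[R]_n,
  (forall e, e \in s -> C e /\ exists mu, e *m P = mu *: e) /\ x = \sum_(e <- s) e.

Lemma cone_eigen_sumD x y :
  cone_eigen_sum x -> cone_eigen_sum y -> cone_eigen_sum (x + y).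
Proof.
move=> [s [s_eigen ->]] [t [t_eigen ->]]; exists (s ++ t); rewrite big_cat.
by split=> // e; rewrite mem_cat => /orP [/s_eigen | /t_eigen].
Qed.

Lemma cone_eigen_decomposition x : C x -> cone_eigen_sum x.
Proof.
suff rank_ind k y : C y -> face_rank_le y k -> cone_eigen_sum y.
  by move=> Cx; apply: (rank_ind n) => //; apply: face_rank_le_n.
elim: k y => [|k IHk] y Cy rk_y.
  by exists [::]; rewrite big_nil (face_rank_le0 Cy rk_y).
case: (cone_eigen_split Cy) => [y_eigen | [y1 [y2 [Cy1 Cy2 y_sum not_y1y not_y2y]]]].
  by exists [:: y]; rewrite big_seq1; split=> // e; rewrite inE => /eqP ->.
have Cy_y1 : C (y - y1) by rewrite y_sum addrAC subrr add0r.
have Cy_y2 : C (y - y2) by rewrite y_sum addrK.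
rewrite y_sum; apply: cone_eigen_sumD; apply: IHk => //.
  exact: face_rank_le_lt Cy1 Cy_y1 rk_y not_y1y.
exact: face_rank_le_lt Cy2 Cy_y2 rk_y not_y2y.
Qed.

Lemma cone_split_eigenspace (l : R) x : C x ->
  exists y z : 'rV[R]_n,
    [/\ (y <= kermx (P - l%:M))%MS, C y, (z <= P - l%:M)%MS, C z & x = y + z].
Proof.
move=> /cone_eigen_decomposition [s [s_eigen ->]]; set T := P - l%:M.
exists (\sum_(e <- s | e *m T == 0) e), (\sum_(e <- s | e *m T != 0) e).
split; last exact: bigID.
- by rewrite big_seq_cond; apply: summx_sub => e /andP [_]; rewrite sub_kermx.
- by rewrite big_seq_cond; apply: cone_sum => e /andP [/s_eigen []].
- rewrite big_seq_cond; apply: summx_sub => e /andP [/s_eigen [_ [mu e_mu]] eT_neq0].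
  have eT : e *m T = (mu - l) *: e by rewrite mulmxBr mul_mx_scalar e_mu scalerBl.
  apply: (eigenvector_submx eT); apply: contraNneq eT_neq0 => mu_l.
  by rewrite eT mu_l scale0r.
- by rewrite big_seq_cond; apply: cone_sum => e /andP [/s_eigen []].
Qed.

Lemma eigenspace_ordered_direct_sum (l : R) (e : 'rV[R]_n) :
  e != 0 -> e *m P = l *: e -> P != l%:M ->
  ordered_direct_sum_decomp C (kermx (P - l%:M)) (P - l%:M).
Proof.
move=> e_neq0 e_eigen P_neq; set T := P - l%:M.
have in_sum v : C v -> (v <= kermx T + T)%MS.
  by case/(cone_split_eigenspace l) => [v1 [v2 [? _ ? _ ->]]]; apply: addmx_sub_adds.
have full : (kermx T + T == 1%:M)%MS.
  apply/andP; split; first exact: submx1.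
  apply/row_subP => i; have [x [y [Cx Cy ->]]] := cone_generating (row i 1%:M).
  apply: addmx_sub; first exact: in_sum.
  by rewrite -scaleN1r; apply: scalemx_sub; apply: in_sum.
split=> //.
- apply: contraNneq e_neq0 => ker0.
  by rewrite -submx0 -ker0 sub_kermx mulmxBr mul_mx_scalar e_eigen subrr.
- by rewrite subr_eq0.
- exact: capmx_kermx_eq0.
- move=> x; split; first exact: cone_split_eigenspace.
  by case=> [y [z [_ Cy _ Cz ->]]]; apply: coneD.
Qed.

Lemma positive_below_id_scalar :
  irreducible_ordered C -> exists2 l, 0 <= l <= 1 & P = l%:M.
Proof.
move=> irr; have [n0|n_gt0] := posnP n.
  exists 0; rewrite ?lexx ?ler01 //.
  by apply/matrixP => -[i i_lt]; exfalso; rewrite n0 in i_lt.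
have [e Ce [e_neq0 [l e_eigen]]] : exists2 e, C e & e != 0 /\ exists l, e *m P = l *: e.
  have [e0 Ce0 e0_neq0] := cone_neq0 n_gt0.
  have [s [s_eigen e0_sum]] := cone_eigen_decomposition Ce0.
  have /hasP [e e_in e_neq0] : has (predC1 0) s.
    apply: contraTT e0_neq0 => /hasPn s0.
    by rewrite negbK e0_sum big_seq big1 // => e /s0 /negPn /eqP.
  by have [Ce e_eigen] := s_eigen e e_in; exists e.
have [P_eq|P_neq] := eqVneq P l%:M; last first.
  case: irr; exists (kermx (P - l%:M)), (P - l%:M).
  exact: eigenspace_ordered_direct_sum e_neq0 e_eigen P_neq.
exists l => //; apply/andP; split; last rewrite -subr_ge0;
  apply: (cone_scale_ge0 Ce e_neq0).
  by rewrite -e_eigen; apply: hP.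
by rewrite scalerBl scale1r -e_eigen -[e in e - _]mulmx1 -mulmxBr; apply: hQ.
Qed.

End PositiveBelowIdentity.

Lemma positive_map_mul_invmx (M chi : 'M[R]_n) : order_automorphism C chi ->
  positive_map C M -> positive_map C (M *m invmx chi).
Proof.
case=> chi_unit chi_order M_pos x Cx.
by apply/chi_order; rewrite mulmxA mulmxKV //; apply: M_pos.
Qed.

End PositiveCone.

Unset Implicit Arguments.
Theorem theorem3p3 (R : realType) (n : nat) (C : set 'M[R]_(1, n))
  (hC : positive_cone C) (hirr : irreducible_ordered C)
  (chi psi mu : 'M[R]_n) (hchi : order_automorphism C chi)
  (hpsi : positive_map C psi) (hmu : positive_map C mu)
  (hsum : chi = psi + mu) :
  exists a b : R, [/\ 0 <= a, 0 <= b, psi = a *: chi & mu = b *: chi].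
Proof.
have [chi_unit _] := hchi.
have P_chi : psi *m invmx chi *m chi = psi by rewrite mulmxKV.
have Q_eq : 1%:M - psi *m invmx chi = mu *m invmx chi.
  by rewrite -(mulmxV chi_unit) {1}hsum mulmxDl addrAC subrr add0r.
have hP := positive_map_mul_invmx hchi hpsi.
have hQ := positive_map_mul_invmx hchi hmu; rewrite -Q_eq in hQ.
have [l /andP [l_ge0 l_le1] P_scalar] := positive_below_id_scalar hC hP hQ hirr.
exists l, (1 - l); split; rewrite ?subr_ge0 //.
  by rewrite -P_chi P_scalar mul_scalar_mx.
have -> : mu = chi - psi by rewrite hsum addrC addKr.
by rewrite -P_chi P_scalar mul_scalar_mx scalerBl scale1r.
Qed.
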